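(* Let $\zeta_5=\exp(2\pi i/5)$, $K=\mathbb{Q}(\zeta_5)\subset\mathbb{C}$, $\mathcal{O}_K=\mathbb{Z}[\zeta_5]$, let $\sigma:K\to\mathbb{C}$ be the embedding with $\sigma(\zeta_5)=\zeta_5^2$, and let $\mathcal{S}=\{z\in\mathcal{O}_K : |\sigma(z)|\le 1\}$. If $z_1,z_2\in\mathcal{S}$ with $z_1\neq z_2$ and $|z_1-z_2|<\frac{\sqrt5}{2}$, then $z_1-z_2$ is a unit of $\mathcal{O}_K$.
   Context: Elements of $K$ are regarded as complex numbers via the inclusion $K\subset\mathbb{C}$. *)

From HB Require Import structures.
From mathcomp Require Import all_boot all_order all_algebra.
From mathcomp Require Import complex.
From mathcomp Require Import all_classical all_reals.
From mathcomp Require Import trigo.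
From mathcomp Require Import Rstruct Rstruct_topology.
Set Implicit Arguments. Unset Strict Implicit. Unset Printing Implicit Defensive.
Import Order.TTheory GRing.Theory Num.Theory.
Local Open Scope ring_scope.
Local Open Scope complex_scope.

Notation CC := (Rdefinitions.R)[i].

Definition zeta5 : CC := (cos (2 * pi / 5)) +i* (sin (2 * pi / 5)).

Definition zpoly (zeta : CC) (a : 'I_4 -> int) : CC :=
  \sum_(k < 4) (a k)%:~R * zeta ^+ k.

(* O_K = Z[zeta_5]: every element is uniquely sum_{k<4} a_k zeta_5^k, a_k in Z. *)
Definition OK (z : CC) : Prop := exists a : 'I_4 -> int, z = zpoly zeta5 a.

Definition unitOK (z : CC) : Prop :=
  OK z /\ exists w : CC, OK w /\ z * w = 1.

Definition cabs (z : CC) : Rdefinitions.R := ComplexField.Normc.normc z.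

From HB Require Import structures.
From mathcomp Require Import all_boot all_order all_algebra.
From mathcomp Require Import complex.
From mathcomp Require Import all_classical all_reals.
From mathcomp Require Import trigo.
From mathcomp Require Import Rstruct Rstruct_topology.
From mathcomp Require Import ring lra zify.
Set Implicit Arguments. Unset Strict Implicit. Unset Printing Implicit Defensive.
Import Order.TTheory GRing.Theory Num.Theory.
Local Open Scope ring_scope.
Local Open Scope complex_scope.

(* Write d = z1 - z2 = sum_k c_k zeta^k.  Its norm N(d) = |d|^2 |sigma(d)|^2 is an
   integer, and |d|^2 < 5/4 while |sigma(d)| <= |sigma(z1)| + |sigma(z2)| <= 2, so
   0 < N(d) < 5.  As 5 is totally ramified, (1 - zeta) | 5 and zeta = 1 mod (1 - zeta),
   so N(d) = (sum_k c_k)^4 mod 5, and fourth powers are 0 or 1 mod 5.  Hence N(d) = 1,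
   and d^-1 = conj(d) sigma(d) conj(sigma(d)) lies in Z[zeta]. *)

Lemma big_ord4 (V : nmodType) (F : 'I_4 -> V) :
  \sum_(k < 4) F k = F 0 + F 1 + F 2 + F 3.
Proof.
rewrite !big_ord_recl big_ord0 addr0 !addrA.
by congr (F _ + F _ + F _ + F _); apply: val_inj.
Qed.

Lemma sum_ord4_exp (R : pzSemiRingType) (a : 'I_4 -> R) (x : R) :
  \sum_(k < 4) a k * x ^+ k = a 0 + a 1 * x + a 2 * x ^+ 2 + a 3 * x ^+ 3.
Proof. by rewrite big_ord4 expr0 mulr1 expr1. Qed.

(* For d = sum_k c_k w^k, |d|^2 = absq0 c + absq1 c * (w + w^-1), and norm5 c is the
   norm of d from Q(w) to Q. *)
Definition absq0 (c : 'I_4 -> int) : int :=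
  c 0 ^+ 2 + c 1 ^+ 2 + c 2 ^+ 2 + c 3 ^+ 2 - (c 0 * c 2 + c 1 * c 3 + c 0 * c 3).
Definition absq1 (c : 'I_4 -> int) : int :=
  c 0 * c 1 + c 1 * c 2 + c 2 * c 3 - (c 0 * c 2 + c 1 * c 3 + c 0 * c 3).
Definition norm5 (c : 'I_4 -> int) : int :=
  absq0 c ^+ 2 - absq0 c * absq1 c - absq1 c ^+ 2.

Section FifthCyclotomicRoot.
Variables (R : comPzRingType) (w : R).
Hypothesis w_cyclo : w ^+ 4 = - (1 + w + w ^+ 2 + w ^+ 3).

Lemma cyclo5_sqr : (w ^+ 2) ^+ 4 = - (1 + w ^+ 2 + (w ^+ 2) ^+ 2 + (w ^+ 2) ^+ 3).
Proof. ring: w_cyclo. Qed.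

Lemma cyclo5_mul_conj (c : 'I_4 -> int) :
  (\sum_(k < 4) (c k)%:~R * w ^+ k) * (\sum_(k < 4) (c k)%:~R * (w ^+ 4) ^+ k)
  = (absq0 c)%:~R + (absq1 c)%:~R * (w + w ^+ 4).
Proof. by rewrite !sum_ord4_exp /absq0 /absq1; ring: w_cyclo. Qed.

Lemma cyclo5_norm (u v : int) :
  (u%:~R + v%:~R * (w + w ^+ 4)) * (u%:~R + v%:~R * (w ^+ 2 + (w ^+ 2) ^+ 4))
  = (u ^+ 2 - u * v - v ^+ 2)%:~R.
Proof. ring: w_cyclo. Qed.

End FifthCyclotomicRoot.

Lemma norm5_mod5 (c : 'I_4 -> int) :
  exists m, norm5 c = (\sum_(k < 4) c k) ^+ 4 + 5 * m.
Proof.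
set u := absq0 c; set v := absq1 c; set t := c 0 * c 2 + c 1 * c 3 + c 0 * c 3.
have sum2 : (\sum_(k < 4) c k) ^+ 2 = u + 2 * v + 5 * t.
  by rewrite big_ord4 /u /v /t /absq0 /absq1; ring.
exists (- (u * v + v ^+ 2) - 2 * t * (u + 2 * v) - 5 * t ^+ 2).
by rewrite -[4%N]/(2 * 2)%N exprM sum2 /norm5 -/u -/v; ring.
Qed.

Lemma fourth_power_mod5 (s : int) : exists k, s ^+ 4 = 5 * k \/ s ^+ 4 = 5 * k + 1.
Proof.
have sE := divz_eq s 5; set t := (s %/ 5)%Z in sE; set r := (s %% 5)%Z in sE.
have r_ge0 : 0 <= r by apply: modz_ge0.
have r_lt5 : r < 5 by apply: ltz_pmod.
clearbody t r.
have [k rE] : exists k, r ^+ 4 = 5 * k \/ r ^+ 4 = 5 * k + 1.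
  have : r = 0 \/ r = 1 \/ r = 2 \/ r = 3 \/ r = 4 by lia.
  by case=> [->|[->|[->|[->|->]]]]; [exists 0; left | exists 0; right
    | exists 3; right | exists 16; right | exists 51; right].
have s4E : s ^+ 4 = r ^+ 4
    + 5 * (125 * t ^+ 4 + 100 * t ^+ 3 * r + 30 * t ^+ 2 * r ^+ 2 + 4 * t * r ^+ 3).
  by rewrite sE; ring.
exists (k + 125 * t ^+ 4 + 100 * t ^+ 3 * r + 30 * t ^+ 2 * r ^+ 2 + 4 * t * r ^+ 3).
by rewrite s4E; case: rE => ->; [left | right]; ring.
Qed.

Lemma norm5_eq1 (c : 'I_4 -> int) : 0 < norm5 c < 5 -> norm5 c = 1.
Proof.
have [m ->] := norm5_mod5 c.
have [k [->|->]] := fourth_power_mod5 (\sum_(k < 4) c k); lia.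
Qed.

Lemma sqr_eq_5sqr (x y : int) : x ^+ 2 = 5 * y ^+ 2 -> y = 0.
Proof.
move=> xy; have [|y_gt0] := posnP `|y|%N; first by move/eqP; rewrite absz_eq0 => /eqP.
have xyN : (`|x| ^ 2 = 5 * `|y| ^ 2)%N by have := congr1 absz xy; rewrite abszM !abszX.
have x_gt0 : (0 < `|x|)%N by move: xyN y_gt0; nia.
(* the 5-adic valuation is even on the left and odd on the right *)
have := congr1 (logn 5) xyN.
by rewrite lognM ?expn_gt0 ?x_gt0 ?y_gt0 // !lognX (@logn_prime 5 5) //=; lia.
Qed.

Lemma norm5_eq0 (c : 'I_4 -> int) : norm5 c = 0 -> absq0 c = 0 /\ absq1 c = 0.
Proof.
rewrite /norm5; move: (absq0 c) (absq1 c) => u v N0.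
have v0 : v = 0.
  apply: (@sqr_eq_5sqr (2 * u - v)); apply/eqP; rewrite -subr_eq0.
  have -> : (2 * u - v) ^+ 2 - 5 * v ^+ 2 = 4 * (u ^+ 2 - u * v - v ^+ 2) by ring.
  by rewrite N0 mulr0.
by move: N0; rewrite v0 mulr0 expr0n /= !subr0 => /eqP; rewrite expf_eq0 /= => /eqP.
Qed.

Lemma expr_cos_sin (R : realType) (x : R) (n : nat) :
  (cos x +i* sin x) ^+ n = cos (n%:R * x) +i* sin (n%:R * x).
Proof.
elim: n => [|n IHn]; first by rewrite expr0 mul0r trigo.cos0 trigo.sin0.
rewrite exprS IHn -addn1 natrD mulrDl mul1r addrC trigo.cosD trigo.sinD.
by simpc; congr (_ +i* _); ring.
Qed.

Lemma zeta5_exp5 : zeta5 ^+ 5 = 1.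
Proof.
rewrite /zeta5 expr_cos_sin.
have -> : 5%:R * (2 * pi / 5) = pi *+ 2 :> Rdefinitions.R by rewrite mulr2n; field.
by rewrite trigo.cos2pi trigo.sin2pi.
Qed.

Lemma zeta5_neq1 : zeta5 != 1.
Proof.
apply/eqP => -[_ /eqP]; apply/negP; rewrite gt_eqF //.
apply: trigo.sin_gt0_pi; have := @trigo.pi_gt0 Rdefinitions.R => pi_gt0.
by apply/andP; split; lra.
Qed.

Lemma zeta5_cyclo : zeta5 ^+ 4 = - (1 + zeta5 + zeta5 ^+ 2 + zeta5 ^+ 3).
Proof.
apply/eqP; rewrite -addr_eq0.
have : (zeta5 - 1) * (zeta5 ^+ 4 + (1 + zeta5 + zeta5 ^+ 2 + zeta5 ^+ 3)) = zeta5 ^+ 5 - 1.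
  by ring.
by rewrite zeta5_exp5 subrr => /eqP; rewrite mulf_eq0 subr_eq0 (negbTE zeta5_neq1).
Qed.

Lemma conjc_zeta5 : conjc zeta5 = zeta5 ^+ 4.
Proof.
have : zeta5 ^+ 5 != 0 by rewrite zeta5_exp5 oner_neq0.
rewrite expf_eq0 /= => zeta5_nz.
apply: (mulfI zeta5_nz); rewrite -exprS zeta5_exp5 /zeta5; simpc.
by rewrite -!expr2 trigo.cos2Dsin2 mulrC addNr.
Qed.

Lemma conjc_zeta5_sqr : conjc (zeta5 ^+ 2) = (zeta5 ^+ 2) ^+ 4.
Proof.
have -> : conjc (zeta5 ^+ 2) = conjc zeta5 ^+ 2 by rewrite rmorphXn.
by rewrite conjc_zeta5 -!exprM.
Qed.

Lemma sqr_cabs (z : CC) : (cabs z ^+ 2)%:C = z * conjc z.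
Proof. by rewrite -sqr_normc normc_def rmorphXn; case: z. Qed.

Lemma cabs_ge0 (z : CC) : 0 <= cabs z.
Proof. by case: z => x y; apply: sqrtr_ge0. Qed.

Lemma conjc_zpoly (w : CC) (c : 'I_4 -> int) : conjc (zpoly w c) = zpoly (conjc w) c.
Proof. by rewrite rmorph_sum; apply: eq_bigr => k _; rewrite rmorphM rmorph_int rmorphXn. Qed.

Lemma zpolyB (w : CC) (a b : 'I_4 -> int) : zpoly w a - zpoly w b = zpoly w (a \- b).
Proof. by rewrite -sumrB; apply: eq_bigr => k _; rewrite rmorphB mulrBl. Qed.

Lemma sqr_cabs_zpoly (w : CC) (c : 'I_4 -> int) :
    w ^+ 4 = - (1 + w + w ^+ 2 + w ^+ 3) -> conjc w = w ^+ 4 ->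
  (cabs (zpoly w c) ^+ 2)%:C = (absq0 c)%:~R + (absq1 c)%:~R * (w + w ^+ 4).
Proof. by move=> w_cyclo wJ; rewrite sqr_cabs conjc_zpoly wJ; apply: cyclo5_mul_conj. Qed.

Lemma norm5_cabs (c : 'I_4 -> int) :
  (norm5 c)%:~R = cabs (zpoly zeta5 c) ^+ 2 * cabs (zpoly (zeta5 ^+ 2) c) ^+ 2.
Proof.
apply: complexI; rewrite rmorphM /= (sqr_cabs_zpoly _ zeta5_cyclo conjc_zeta5).
rewrite (sqr_cabs_zpoly _ (cyclo5_sqr zeta5_cyclo) conjc_zeta5_sqr).
by rewrite (cyclo5_norm zeta5_cyclo) rmorph_int.
Qed.

Lemma norm5_gt0 (c : 'I_4 -> int) : zpoly zeta5 c != 0 -> 0 < norm5 c.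
Proof.
move=> d_neq0; rewrite lt_def -(ler0z Rdefinitions.R) norm5_cabs.
rewrite mulr_ge0 ?sqr_ge0 ?andbT //; apply/eqP => /norm5_eq0[u0 v0].
move: d_neq0; have := sqr_cabs_zpoly c zeta5_cyclo conjc_zeta5.
rewrite u0 v0 mul0r addr0 => /complexI /eqP; rewrite expf_eq0 /=.
by move=> /eqP /ComplexField.Normc.eq0_normc ->; rewrite eqxx.
Qed.

Definition eval5 : {poly int} -> CC :=
  horner_morph (fun a : int => mulrC zeta5 a%:~R).
HB.instance Definition _ := GRing.RMorphism.on eval5.

Lemma zpoly_eval5 (k : nat) (c : 'I_4 -> int) :
  zpoly (zeta5 ^+ k) c = eval5 (\sum_(i < 4) (c i)%:P * 'X^(k * i)).
Proof.
rewrite rmorph_sum; apply: eq_bigr => i _.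
by rewrite rmorphM rmorphXn /= /eval5 horner_morphC horner_morphX exprM.
Qed.

Lemma OK_eval5 (p : {poly int}) : OK (eval5 p).
Proof.
pose phi5 : {poly int} := \poly_(i < 5) 1.
have phi5_monic : phi5 \is monic by rewrite monicE lead_coef_poly.
have phi5_zeta5 : eval5 phi5 = 0.
  rewrite /phi5 poly_def rmorph_sum /=.
  rewrite !big_ord_recr big_ord0 /= !scale1r !rmorphXn /= /eval5 !horner_morphX.
  by rewrite zeta5_cyclo; ring.
have r_small : (size (p %% phi5)%R <= 4)%N.
  have phi5_size : size phi5 = 5 by rewrite size_poly_eq ?oner_eq0.
  by have := ltn_modpN0 p (monic_neq0 phi5_monic); rewrite phi5_size.
exists (fun k => (p %% phi5)`_k).
rewrite {1}(Pdiv.IdomainMonic.divp_eq phi5_monic p) rmorphD rmorphM /= phi5_zeta5 mulr0 add0r.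
rewrite /eval5 /horner_morph (horner_coef_wide _ (leq_trans (size_poly _ _) r_small)).
by apply: eq_bigr => i _; rewrite coef_map.
Qed.

Lemma unitOK_zpoly (c : 'I_4 -> int) : norm5 c = 1 -> unitOK (zpoly zeta5 c).
Proof.
move=> N1; split; first by exists c.
(* the product conj(d) sigma(d) conj(sigma(d)) of the other conjugates of d *)
exists (zpoly (zeta5 ^+ 4) c * (zpoly (zeta5 ^+ 2) c * zpoly (zeta5 ^+ 8) c)); split.
  by rewrite !zpoly_eval5 -!rmorphM; apply: OK_eval5.
have := congr1 (real_complex _) (norm5_cabs c); rewrite N1 rmorph1 rmorphM /= !sqr_cabs.
by rewrite !conjc_zpoly conjc_zeta5 conjc_zeta5_sqr -exprM mulrA => <-.
Qed.

Theorem mainTheorem6 (a b : 'I_4 -> int) :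
  cabs (zpoly (zeta5 ^+ 2) a) <= 1 ->
  cabs (zpoly (zeta5 ^+ 2) b) <= 1 ->
  zpoly zeta5 a <> zpoly zeta5 b ->
  cabs (zpoly zeta5 a - zpoly zeta5 b) < Num.sqrt 5 / 2 ->
  unitOK (zpoly zeta5 a - zpoly zeta5 b).
Proof.
move=> sigma_a sigma_b a_neq_b close.
have sigma_close : cabs (zpoly (zeta5 ^+ 2) (a \- b)) <= 2.
  rewrite -zpolyB (le_trans (le_normcD _ _)) // normcN.
  by apply: (le_trans (lerD sigma_a sigma_b)); lra.
rewrite zpolyB in close a_neq_b *; apply/unitOK_zpoly/norm5_eq1.
rewrite norm5_gt0 -?zpolyB ?subr_eq0; last exact/eqP.
rewrite -(ltr_int Rdefinitions.R) norm5_cabs /=.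
have sqrt5 : Num.sqrt 5 ^+ 2 = 5 :> Rdefinitions.R by rewrite sqr_sqrtr ?ler0n.
have s_ge0 := sqrtr_ge0 (5 : Rdefinitions.R).
have := cabs_ge0 (zpoly zeta5 (a \- b)); have := cabs_ge0 (zpoly (zeta5 ^+ 2) (a \- b)).
move: close sigma_close; set x := cabs _; set y := cabs _ => x_lt y_le y_ge0 x_ge0.
have x2 : x ^+ 2 < 5 / 4 by nra.
have y2 : y ^+ 2 <= 4 by nra.
by nra.
Qed.
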